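(* Let $(W,S)$ be a chordal Coxeter system with a set $\mathcal B$ of bad irreducible simplices, and suppose that $S$ has no bad separators. Let $B$ be a simplex of $(W,S)$ with two singleton components $\{a\}$ and $\{b\}$ for which there is $c\in S-B$ such that $A=\{a,b,c\}$ is a bad maximal irreducible simplex of $(W,S)$. Then $B-\{a,b\}\subseteq A^\perp$ and $B\cup\{c\}$ is a simplex of $(W,S)$.
   Context: Coxeter system $(W,S)$: $W=\langle S\mid (st)^{m(s,t)}\ (m(s,t)<\infty)\rangle$, $m(s,s)=1$, $m(s,t)=m(t,s)\in\{2,\dots,\infty\}$. $\Gamma(W,S)$: graph on $S$ with edge $\{s,t\}$ iff $s\ne t$, $m(s,t)<\infty$; chordal: every cycle of length $\ge4$ has a chord. A simplex is $A\subseteq S$ with all $m(s,t)<\infty$; $A$ is irreducible if the graph on $A$ with edges $m(s,t)\ge3$ is connected; components of $B$ are vertex sets of connected components of that graph on $B$; maximal irreducible simplex: not properly contained in another irreducible simplex. $A^\perp=\{s\in S: m(s,x)=2\ \forall x\in A\}$. Types ${\bf G}_3,{\bf G}_4$: Coxeter diagram a path with labels $3,5$ resp. $3,3,5$. A set of bad edges is a set $\mathcal B_2$ of pairs $\{a,b\}\subseteq S$ with $5\le m(a,b)<\infty$ such that every irreducible simplex properly containing $\{a,b\}$ has type ${\bf G}_3$ or ${\bf G}_4$; an irreducible simplex is bad if it contains a pair in $\mathcal B_2$; $\mathcal B$ is the set of all bad irreducible simplices. For $c,f\in S$, $B\subseteq S$ is a $(c,f)$-separator if $c,f\notin B$ lie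 in different connected components of $\Gamma(W,S)-B$; minimal if no proper subset is one. A bad separator of $S$ is a subset $B\subseteq S$ for which there are $a,b\in B$ with $m(a,b)=2$ and $c\in S-B$ such that $A=\{a,b,c\}$ is a bad maximal irreducible simplex, $B\subseteq\{a,b\}\cup A^\perp$, and some $f\in S-B$ such that $B$ is a minimal $(c,f)$-separator of $S$. *)

(* Combinatorial data of a Coxeter system (W,S):
   S is a finite type T, and the Coxeter matrix is m : T -> T -> option nat,
   where [None] encodes m(s,t) = infinity.  All notions in the statement only
   depend on the Coxeter matrix. *)
From mathcomp Require Import all_boot.
Set Implicit Arguments. Unset Strict Implicit. Unset Printing Implicit Defensive.

Section Coxeter.
Variable T : finType.
Variable m : T -> T -> option nat.

Definition coxeter_matrix : Prop :=
  (forall s, m s s = Some 1) /\ (forall s t, m s t = m t s) /\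
  (forall s t, s != t -> forall k, m s t = Some k -> 2 <= k).

Definition mfin (s t : T) : bool := m s t != None.

Definition mge (k : nat) (s t : T) : bool :=
  if m s t is Some n then k <= n else true.

Definition gedge (s t : T) : bool := (s != t) && mfin s t.

Definition chordal : Prop :=
  forall c : seq T, uniq c -> 4 <= size c -> cycle gedge c ->
    exists x y, [/\ x \in c, y \in c, x != y,
                    (next c x != y) && (next c y != x) & gedge x y].

Definition simplex (A : {set T}) : Prop :=
  forall s t, s \in A -> t \in A -> mfin s t.

Definition dgraph (B : {set T}) : rel T :=
  fun s t => [&& s \in B, t \in B, s != t & mge 3 s t].

Definition irreducible (A : {set T}) : Prop :=
  A != set0 /\ forall s t, s \in A -> t \in A -> connect (dgraph A) s t.

Definition irreducible_simplex (A : {set T}) : Prop :=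
  simplex A /\ irreducible A.

Definition component (B C : {set T}) : Prop :=
  exists2 x, x \in B & C = [set y in B | connect (dgraph B) x y].

Definition maximal_irreducible_simplex (A : {set T}) : Prop :=
  irreducible_simplex A /\
  forall A' : {set T}, irreducible_simplex A' -> ~ (A \proper A').

Definition perp (A : {set T}) : {set T} :=
  [set s | [forall x in A, m s x == Some 2]].

Definition typeG3 (A : {set T}) : Prop :=
  exists x y z, [/\ A = [set x; y; z], uniq [:: x; y; z] &
    [/\ m x y = Some 3, m y z = Some 5 & m x z = Some 2]].

Definition typeG4 (A : {set T}) : Prop :=
  exists w x y z, [/\ A = [set w; x; y; z], uniq [:: w; x; y; z] &
    [/\ m w x = Some 3, m x y = Some 3, m y z = Some 5 &
        [/\ m w y = Some 2, m w z = Some 2 & m x z = Some 2]]].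

Definition bad_edges (B2 : {set {set T}}) : Prop :=
  forall e, e \in B2 ->
    exists a b, [/\ e = [set a; b], a != b, mfin a b, mge 5 a b &
      forall A : {set T}, irreducible_simplex A -> e \proper A -> typeG3 A \/ typeG4 A].

Definition bad (B2 : {set {set T}}) (A : {set T}) : Prop :=
  irreducible_simplex A /\ exists2 e, e \in B2 & e \subset A.

Definition separator (c f : T) (B : {set T}) : Prop :=
  [/\ c \notin B, f \notin B &
      ~~ connect [rel x y | [&& x \notin B, y \notin B & gedge x y]] c f].

Definition minimal_separator (c f : T) (B : {set T}) : Prop :=
  separator c f B /\ forall B' : {set T}, B' \proper B -> ~ separator c f B'.

Definition bad_separator (B2 : {set {set T}}) (B : {set T}) : Prop :=
  exists a b c, [/\ a \in B, b \in B, m a b = Some 2, c \notin B &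
    [/\ bad B2 [set a; b; c], maximal_irreducible_simplex [set a; b; c],
        B \subset [set a; b] :|: perp [set a; b; c] &
        exists2 f, f \notin B & minimal_separator c f B]].
End Coxeter.

(* Suppose m(c,f) = oo for some f in B.  Let C be the component of f in the
   graph minus the closed neighbourhood of c, and S the set of neighbours of c
   adjacent to C; S is a minimal (c,f)-separator.  By chordality S is a clique:
   a shortest walk through C between two vertices of S closes up through c to a
   cycle, and a chord of that cycle avoids c, so it shortens the walk unless it
   joins the two ends.  Now a, b lie in S (they are adjacent to f), and every
   other vertex of S is adjacent to a, b and c, hence lies in the orthogonal
   complement of the maximal irreducible simplex {a,b,c}: S is a bad separator.
   So c is adjacent to all of B, and maximality of {a,b,c} again puts
   B - {a,b} in its orthogonal complement, since the singleton components a
   and b commute with the rest of B. *)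

From mathcomp Require Import all_boot.
Set Implicit Arguments. Unset Strict Implicit. Unset Printing Implicit Defensive.

Lemma next_cat_cons (T : eqType) (s1 s2 : seq T) (u : T) :
  uniq (s1 ++ u :: s2) -> next (s1 ++ u :: s2) u = head u (s2 ++ s1).
Proof.
move=> Us; rewrite -(next_rot (size s1) Us) rot_size_cat /=.
by case: (s2 ++ s1) => [|y t] /=; rewrite eqxx.
Qed.

Lemma split_mem2 (T : eqType) (s : seq T) (u v : T) :
  u \in s -> v \in s -> u != v ->
  exists s1 s2 s3, s = s1 ++ u :: s2 ++ v :: s3 \/ s = s1 ++ v :: s2 ++ u :: s3.
Proof.
case/splitPr=> p1 p2; rewrite mem_cat inE => /or3P[/splitPr[q1 q2] | /eqP-> | ].
- by exists q1, q2, p2; right; rewrite -catA.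
- by rewrite eqxx.
- by case/splitPr=> q2 q3; exists p1, q2, q3; left.
Qed.

Lemma sorted_shortcut (T : Type) (e : rel T) (s1 s2 s3 : seq T) (u v : T) :
  sorted e (s1 ++ u :: s2 ++ v :: s3) -> e u v -> sorted e (s1 ++ u :: v :: s3).
Proof.
by rewrite !sorted_cat_cons cat_path /= => /and3P[-> _ /andP[_ ->]] ->.
Qed.

Section ChordalSeparators.

Variables (T : finType) (m : T -> T -> option nat).
Hypothesis m_sym : forall s t, m s t = m t s.

Lemma gedge_sym : symmetric (gedge m).
Proof. by move=> s t; rewrite /gedge /mfin eq_sym m_sym. Qed.

Lemma gedge_irrefl : irreflexive (gedge m).
Proof. by move=> s; rewrite /gedge eqxx. Qed.

Variable c : T.

Definition far (v : T) : bool := (v != c) && ~~ gedge m c v.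

Definition far_edge : rel T := [rel x y | [&& far x, far y & gedge m x y]].

Definition far_component (f : T) : {set T} := [set v | connect far_edge f v].

Definition far_boundary (f : T) : {set T} :=
  [set v | gedge m c v && [exists w in far_component f, gedge m v w]].

Lemma far_edge_sym : symmetric far_edge.
Proof. by move=> x y; rewrite /far_edge /= gedge_sym andbCA. Qed.

Lemma far_component_far f v : far f -> v \in far_component f -> far v.
Proof.
move=> farf; rewrite inE => /(closed_connect (_ : closed far_edge far)).
rewrite -!topredE /= farf => <- //.
by move=> x y /and3P[farx fary _]; rewrite -!topredE /= farx fary.
Qed.

Lemma far_boundaryN f v : far v -> v \notin far_boundary f.
Proof. by case/andP=> _ cNv; rewrite inE (negbTE cNv). Qed.

Lemma far_boundary_separator f : far f -> separator m c f (far_boundary f).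
Proof.
move=> farf; split; [by rewrite inE gedge_irrefl | exact: far_boundaryN |].
set S := far_boundary f; set R := [rel x y | [&& x \notin S, y \notin S & gedge m x y]].
have R_sym : connect_sym R by apply: sym_connect_sym => x y; rewrite /= gedge_sym andbCA.
have C_closed : closed R [in far_component f].
  apply: (@intro_closed _ R R_sym) => x y /and3P[_ yNS xy]; rewrite !inE => xC.
  have farx : far x by apply: far_component_far farf _; rewrite inE.
  have fary : far y.
    apply/andP; split.
      by apply: contraTneq farx => yc; rewrite /far -yc gedge_sym xy andbF.
    apply: contra yNS => cy; rewrite inE cy.
    by apply/existsP; exists x; rewrite inE xC gedge_sym.
  by apply: connect_trans xC (connect1 _); apply/and3P.
apply/negP => /(closed_connect C_closed); rewrite !inE connect0 => cC.
by have := @far_component_far f c farf; rewrite inE cC /far eqxx => /(_ isT).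
Qed.

Lemma far_boundary_minimal f : far f -> minimal_separator m c f (far_boundary f).
Proof.
move=> farf; split; first exact: far_boundary_separator.
move=> S' /properP[subS' [v vS vNS']] [_ _ /negP]; apply.
have notS' z : z \notin far_boundary f -> z \notin S' by apply: contra (subsetP subS' z).
move: vS; rewrite inE => /andP[cv /existsP[w /andP[wC vw]]].
apply: (connect_trans (y := v)).
  by apply: connect1; rewrite /= vNS' cv notS' // inE gedge_irrefl.
apply: (connect_trans (y := w)).
  apply: connect1; rewrite /= vNS' vw notS' //.
  by rewrite far_boundaryN // (far_component_far farf wC).
rewrite inE (sym_connect_sym far_edge_sym) in wC.
apply: connect_sub wC => x y /and3P[fx fy xy]; apply: connect1.
by rewrite /= xy !notS' ?far_boundaryN.
Qed.

Hypothesis chordal_m : chordal m.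

Lemma far_cycle_chord (x y : T) (q : seq T) :
  gedge m c x -> gedge m c y -> q != [::] -> uniq (x :: rcons q y) ->
  path (gedge m) x (rcons q y) -> all far q ->
  exists s1 s2 s3 u v, [/\ x :: rcons q y = s1 ++ u :: s2 ++ v :: s3,
                          s2 != [::] & gedge m u v].
Proof.
move=> cx cy qN0 Uw sw farq; set w := x :: rcons q y in Uw *.
have farw v : v \in w -> [|| v == x, v == y | far v].
  by rewrite inE mem_rcons inE orbCA => /or3P[-> | -> | /(allP farq) ->]; rewrite ?orbT.
have cNw : c \notin w.
  apply/negP => /farw /or3P[/eqP cx' | /eqP cy' | /andP[/eqP //]].
  - by rewrite -cx' gedge_irrefl in cx.
  - by rewrite -cy' gedge_irrefl in cy.
have Ucw : uniq (c :: w) by rewrite /= cNw.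
have cycle_cw : cycle (gedge m) (c :: w).
  by rewrite /= cx rcons_path sw last_rcons gedge_sym.
have size_cw : 4 <= size (c :: w) by rewrite /= size_rcons; case: (q) qN0.
have [u [v [ucw vcw uv /andP[nuv nvu] euv]]] := chordal_m Ucw size_cw cycle_cw.
have next_c : next (c :: w) c = x by rewrite (next_cat_cons (s1 := [::]) Ucw).
have next_y : next (c :: w) y = c.
  have Ucw' : uniq ((c :: x :: q) ++ y :: [::]) by rewrite cats1.
  by move: (next_cat_cons Ucw'); rewrite cats1.
(* A chord at the apex c would join c to a far vertex. *)
have apex_chord v' : v' \in c :: w -> next (c :: w) c != v' ->
    next (c :: w) v' != c -> ~~ gedge m c v'.
  rewrite inE => /predU1P[-> | /farw /or3P[/eqP-> | /eqP-> | /andP[_ ->] //]].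
  - by rewrite gedge_irrefl.
  - by rewrite next_c eqxx.
  - by rewrite next_y eqxx.
have [uc | uNc] := eqVneq u c.
  by subst u; case/negP: (apex_chord v vcw nuv nvu).
have [vc | vNc] := eqVneq v c.
  by subst v; case/negP: (apex_chord u ucw nvu nuv); rewrite gedge_sym.
have uw : u \in w by move: ucw; rewrite inE (negbTE uNc).
have vw : v \in w by move: vcw; rewrite inE (negbTE vNc).
have [s1 [s2 [s3 Ew]]] := split_mem2 uw vw uv.
have consecutive u' v' s3' : w = s1 ++ u' :: [::] ++ v' :: s3' -> next (c :: w) u' = v'.
  by move: Ucw => /[swap] ->; rewrite cat0s -cat_cons => /next_cat_cons ->.
exists s1, s2, s3; case: Ew => Ew; [exists u, v | exists v, u].
- by split=> //; apply: contraNneq nuv => s20; rewrite (consecutive u v s3) -?s20.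
- split=> //; last by rewrite gedge_sym.
  by apply: contraNneq nvu => s20; rewrite (consecutive v u s3) -?s20.
Qed.

Lemma chordal_far_path (x y : T) (w : seq T) :
  gedge m c x -> gedge m c y -> x != y -> sorted (gedge m) w ->
  head c w = x -> last c w = y ->
  {subset w <= [pred v | [|| v == x, v == y | far v]]} -> gedge m x y.
Proof.
move=> cx cy xy; have [k] := ubnP (size w).
elim: k w => // k IHk [|x0 p] ltwk sw hw lw subw; first by rewrite -hw gedge_irrefl in cx.
rewrite /= in hw lw sw; subst x0.
case: (shortenP sw) lw => p' sp' Up' subp' lw.
case/lastP: p' sp' Up' subp' lw => [|q y'] sp' Up' subp' /=.
  by move=> yx; rewrite yx eqxx in xy.
rewrite last_rcons => y'y; subst y'.
have [q0 | qN0] := eqVneq q [::]; first by move: sp'; rewrite q0 /= andbT.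
set w' := x :: rcons q y in Up'.
have sub_w' : {subset w' <= x :: p}.
  by move=> v; rewrite !inE => /predU1P[-> | /subp' ->]; rewrite ?eqxx ?orbT.
have farq : all far q.
  apply/allP => v vq; move: Up'; rewrite /= mem_rcons inE rcons_uniq negb_or.
  case/and3P=> /andP[_ xNq] yNq _; have /subw/or3P[/eqP vx | /eqP vy | //] :
    v \in x :: p by apply: sub_w'; rewrite !inE mem_rcons inE vq !orbT.
  - by rewrite -vx vq in xNq.
  - by rewrite -vy vq in yNq.
have [s1 [s2 [s3 [u [v [Ew s2N0 euv]]]]]] := far_cycle_chord cx cy qN0 Up' sp' farq.
apply: (IHk (s1 ++ u :: v :: s3)).
- rewrite ltnS in ltwk; apply: leq_trans ltwk.
  apply: leq_trans (uniq_leq_size Up' sub_w'); rewrite /w' Ew.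
  rewrite !size_cat ltn_add2l -[u :: v :: s3]cat1s -[u :: s2 ++ _]cat_cons.
  by rewrite !size_cat ltn_add2r /= ltnS lt0n size_eq0.
- by apply: (sorted_shortcut (s2 := s2)) euv; rewrite -Ew.
- by move: (congr1 (head c) Ew); case: (s1).
- by move: (congr1 (last c) Ew); rewrite /= last_rcons !last_cat /= last_cat.
- move=> v0 v0w; apply/subw/sub_w'; rewrite /w' Ew; apply: mem_subseq v0w.
  by rewrite cat_subseq //= eqxx suffix_subseq.
Qed.

Lemma far_boundary_clique f u v :
  far f -> u \in far_boundary f -> v \in far_boundary f -> u != v -> gedge m u v.
Proof.
move=> farf; rewrite !inE => /andP[cu /existsP[w1 /andP[w1C uw1]]].
case/andP=> cv /existsP[w2 /andP[w2C vw2]] uv; rewrite !inE in w1C w2C.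
have /connectP[p pw1 w2E] : connect far_edge w1 w2.
  by apply: connect_trans w2C; rewrite (sym_connect_sym far_edge_sym).
apply: (chordal_far_path (w := u :: w1 :: rcons p v)) cu cv uv _ _ _ _ => //=.
- rewrite uw1 rcons_path -w2E gedge_sym vw2 andbT.
  by apply: sub_path pw1 => x' y' /and3P[].
- by rewrite last_rcons.
have far_p z : z \in w1 :: p -> far z.
  move/(path_connect pw1) => w1z; apply: far_component_far farf _.
  by rewrite inE (connect_trans w1C w1z).
move=> z; rewrite !inE mem_rcons inE => /or4P[/eqP-> | zw1 | /eqP-> | zp].
- by rewrite eqxx.
- by rewrite far_p ?inE ?zw1 ?orbT.
- by rewrite eqxx orbT.
- by rewrite far_p ?inE ?zp ?orbT.
Qed.
End ChordalSeparators.

Section CoxeterSimplices.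

Variables (T : finType) (m : T -> T -> option nat).
Hypothesis cox : coxeter_matrix m.

Let m_sym : forall s t, m s t = m t s := proj1 (proj2 cox).

Lemma mfin_sym s t : mfin m s t = mfin m t s.
Proof. by rewrite /mfin m_sym. Qed.

Lemma dgraph_sym (A : {set T}) : symmetric (dgraph m A).
Proof. by move=> s t; rewrite /dgraph /mge m_sym eq_sym andbCA. Qed.

Lemma simplex_setU1 (A : {set T}) (v : T) :
  simplex m A -> (forall x, x \in A -> mfin m v x) -> simplex m (v |: A).
Proof.
move=> simplexA vA s t; rewrite !in_setU1.
case/predU1P=> [-> | sA] /predU1P[-> | tA]; last exact: simplexA.
- by rewrite /mfin cox.1.
- exact: vA.
- by rewrite mfin_sym vA.
Qed.

Lemma irreducible_setU1 (A : {set T}) (v x : T) :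
  irreducible m A -> x \in A -> v != x -> mge m 3 v x -> irreducible m (v |: A).
Proof.
move=> [_ connA] xA vx vx3; split; first by apply/set0Pn; exists v; rewrite setU11.
have to_x s : s \in v |: A -> connect (dgraph m (v |: A)) s x.
  rewrite in_setU1 => /predU1P[-> | sA].
    by apply: connect1; rewrite /dgraph setU11 in_setU1 xA orbT vx.
  apply: connect_sub (connA s x sA xA) => y z /and4P[yA zA yz yz3].
  by apply: connect1; rewrite /dgraph !in_setU1 yA zA yz yz3 !orbT.
move=> s t sA tA; apply: connect_trans (to_x s sA) _.
by rewrite (sym_connect_sym (dgraph_sym _)) to_x.
Qed.

Lemma maximal_irreducible_simplex_perp (A : {set T}) (v : T) :
  maximal_irreducible_simplex m A -> v \notin A ->
  (forall x, x \in A -> mfin m v x) -> v \in perp m A.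
Proof.
move=> [[simplexA irrA] maxA] vNA vA; rewrite inE; apply/forall_inP => x xA.
have vx : v != x by apply: contraNneq vNA => ->.
move: (vA x xA); rewrite /mfin; case vxk: (m v x) => [k|] // _.
have k2 : 2 <= k by apply: cox.2.2 vxk.
rewrite eqE /= eqn_leq k2 andbT leqNgt; apply/negP => k3.
apply: (maxA (v |: A)); last by rewrite properUr // sub1set.
split; first exact: simplex_setU1.
by apply: irreducible_setU1 irrA xA vx _; rewrite /mge vxk.
Qed.

Lemma singleton_component (B : {set T}) (a : T) :
  simplex m B -> component m B [set a] ->
  a \in B /\ forall y, y \in B -> y != a -> m a y = Some 2.
Proof.
move=> simplexB [x xB compB].
have /set1P xa : x \in [set a] by rewrite compB inE xB connect0.
subst x; split=> // y yB ya.
move: (simplexB a y xB yB); rewrite /mfin; case ayk: (m a y) => [k|] // _.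
have k2 : 2 <= k by apply: cox.2.2 ayk; rewrite eq_sym.
congr Some; apply/eqP; rewrite eqn_leq k2 andbT leqNgt; apply/negP => k3.
have : y \in [set a].
  by rewrite compB inE yB connect1 // /dgraph xB yB eq_sym ya /mge ayk.
by rewrite inE (negbTE ya).
Qed.

Lemma maximal_irreducible_simplex3_perp (a b c v : T) :
  maximal_irreducible_simplex m [set a; b; c] -> v \notin [set a; b; c] ->
  mfin m v a -> mfin m v b -> mfin m v c -> v \in perp m [set a; b; c].
Proof.
move=> maxA vNA va vb vc; apply: maximal_irreducible_simplex_perp maxA vNA _.
by move=> x; rewrite !inE => /orP[/orP[] | ] /eqP->.
Qed.

End CoxeterSimplices.

Lemma apex_mfin (T : finType) (m : T -> T -> option nat) (B2 : {set {set T}})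
    (a b c f : T) :
  coxeter_matrix m -> chordal m -> (forall X : {set T}, ~ bad_separator m B2 X) ->
  m a b = Some 2 -> bad m B2 [set a; b; c] ->
  maximal_irreducible_simplex m [set a; b; c] ->
  gedge m a f -> gedge m b f -> f != c -> mfin m c f.
Proof.
move=> cox chordal_m no_bad ab badA maxA af bf fc.
have m_sym : forall s t, m s t = m t s := proj1 (proj2 cox).
have [-> | ca] := eqVneq c a; first by case/andP: af.
have [-> | cb] := eqVneq c b; first by case/andP: bf.
apply: contraT => cNf; have farf : far m c f by rewrite /far fc /gedge (negbTE cNf) andbF.
set S := far_boundary m c f.
have [[simplexA _] _] := maxA.
have abS x : x \in [set a; b] -> x \in S.
  rewrite !inE => abx; rewrite /gedge; apply/andP; split.
    by case/orP: abx => /eqP->; rewrite ?ca ?cb simplexA ?inE ?eqxx ?orbT.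
  by apply/existsP; exists f; rewrite inE connect0; case/orP: abx => /eqP->.
have [cNS fNS _] := far_boundary_separator m_sym farf.
case: (no_bad S); exists a, b, c; split=> //.
- by apply: abS; rewrite !inE eqxx.
- by apply: abS; rewrite !inE eqxx orbT.
split=> //; last by exists f => //; apply: far_boundary_minimal.
apply/subsetP => v vS; rewrite in_setU; case/boolP: (v \in [set a; b]) => //= vNab.
have cv : gedge m c v by move: vS; rewrite inE => /andP[].
have vab x : x \in [set a; b] -> mfin m v x.
  move=> xab; have xv : x != v by apply: contraNneq vNab => <-.
  have /andP[_] := far_boundary_clique m_sym chordal_m farf (abS x xab) vS xv.
  by rewrite mfin_sym.
apply: (maximal_irreducible_simplex3_perp cox maxA).
- by rewrite !inE in vNab *; rewrite negb_or vNab eq_sym; case/andP: cv.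
- by apply: vab; rewrite !inE eqxx.
- by apply: vab; rewrite !inE eqxx orbT.
- by rewrite mfin_sym //; case/andP: cv.
Qed.

Theorem lemma4p5 (T : finType) (m : T -> T -> option nat)
    (B2 : {set {set T}}) (B : {set T}) (a b c : T) :
  coxeter_matrix m -> chordal m -> bad_edges m B2 ->
  (forall X : {set T}, ~ bad_separator m B2 X) ->
  simplex m B -> a != b ->
  component m B [set a] -> component m B [set b] ->
  c \notin B ->
  bad m B2 [set a; b; c] -> maximal_irreducible_simplex m [set a; b; c] ->
  B :\: [set a; b] \subset perp m [set a; b; c] /\ simplex m (c |: B).
Proof.
move=> cox chordal_m _ no_bad simplexB ab compa compb cNB badA maxA.
have [aB a_perp] := singleton_component cox simplexB compa.
have [bB b_perp] := singleton_component cox simplexB compb.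
have [[simplexA _] _] := maxA.
have fNc f : f \in B -> f != c by apply: contraTneq => ->.
have cB f : f \in B -> mfin m c f.
  move=> fB; have [-> | fa] := eqVneq f a; first by rewrite simplexA ?inE ?eqxx ?orbT.
  have [-> | fb] := eqVneq f b; first by rewrite simplexA ?inE ?eqxx ?orbT.
  apply: apex_mfin cox chordal_m no_bad (a_perp b bB _) badA maxA _ _ (fNc f fB).
  - by rewrite eq_sym.
  - by rewrite /gedge eq_sym fa simplexB.
  - by rewrite /gedge eq_sym fb simplexB.
split; last exact: simplex_setU1.
apply/subsetP => d /setDP[dB]; rewrite in_set2 => /norP[da db].
apply: (maximal_irreducible_simplex3_perp cox maxA).
- by rewrite !inE (negbTE da) (negbTE db) fNc.
- by rewrite (mfin_sym cox) /mfin a_perp.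
- by rewrite (mfin_sym cox) /mfin b_perp.
- by rewrite (mfin_sym cox) cB.
Qed.
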